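(* Let $q=2^t$. For any choice of the set $Y$, every $\chi_\ell$ with $\ell\in L\setminus\{\ell_0\}$, as well as the constant function $\mathbf{1}$ on $P$, lies in the $\mathbb{F}_2$-span of $\{\chi_\ell:\ell\in X_0\cup Y\cup L_1\}$.
   Context: Let $q$ be a prime power and $V$ a $4$-dimensional vector space over $\mathbb{F}_q$ with a nonsingular alternating bilinear form and symplectic basis $e_0,e_1,e_2,e_3$ with $(e_0,e_3)=(e_1,e_2)=1$. $P$ is the set of $1$-dimensional subspaces of $V$ (points), $L$ the set of totally isotropic $2$-dimensional subspaces (lines). $p_0=\langle e_0\rangle$, $\ell_0=\langle e_0,e_1\rangle$, $L_1$ is the set of lines sharing no point with $\ell_0$. $\mathbb{F}_2[P]$ is the space of functions $P\to\mathbb{F}_2$, $\chi_\ell$ the characteristic function of the point set of a line $\ell$. $X$ is the set of the $q+1$ lines through $p_0$, and $X_0=X\setminus\{\ell_0\}$. $Y$ is any set of $q$ lines, each different from $\ell_0$ and meeting $\ell_0$ in a point other than $p_0$, such that distinct lines of $Y$ meet $\ell_0$ in distinct points (so $Y$ contains exactly one line through each point of $\ell_0\setminus\{p_0\}$). *)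

From HB Require Import structures.
From mathcomp Require Import all_boot all_order all_algebra all_fingroup all_field.
Set Implicit Arguments. Unset Strict Implicit. Unset Printing Implicit Defensive.
Import GRing.Theory.
Local Open Scope ring_scope.

(* Coordinates: V = 'rV[F]_4, e_i = delta_mx 0 i.  Subspaces of V are
   represented canonically by square matrices A with <<A>>%MS = A. *)
Section Symplectic.
Variable F : finFieldType.

Definition i0 : 'I_4 := inord 0.
Definition i1 : 'I_4 := inord 1.
Definition i2 : 'I_4 := inord 2.
Definition i3 : 'I_4 := inord 3.

Definition evec (i : 'I_4) : 'rV[F]_4 := delta_mx 0 i.

Definition sform (u v : 'rV[F]_4) : F :=
  u 0 i0 * v 0 i3 - u 0 i3 * v 0 i0 + u 0 i1 * v 0 i2 - u 0 i2 * v 0 i1.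

Definition is_subspace (A : 'M[F]_4) : bool := (<<A>>%MS == A).

Definition is_point (A : 'M[F]_4) : bool := is_subspace A && (\rank A == 1)%N.

Definition is_line (A : 'M[F]_4) : bool :=
  [&& is_subspace A, (\rank A == 2)%N &
    [forall u : 'rV[F]_4, forall v : 'rV[F]_4,
       ((u <= A)%MS && (v <= A)%MS) ==> (sform u v == 0)]].

Definition incident (p l : 'M[F]_4) : bool := (p <= l)%MS.

Definition p0 : 'M[F]_4 := <<evec i0>>%MS.
Definition l0 : 'M[F]_4 := <<col_mx (evec i0) (evec i1)>>%MS.

Definition X0 : {set 'M[F]_4} :=
  [set l | is_line l & incident p0 l && (l != l0)].

Definition L1 : {set 'M[F]_4} :=
  [set l | is_line l &
     [forall p : 'M[F]_4, ~~ [&& is_point p, incident p l & incident p l0]]].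

(* F_2-valued functions on P, extended by 0 off P *)
Definition chi (l : 'M[F]_4) : 'M[F]_4 -> 'F_2 :=
  fun p => if is_point p && incident p l then 1 else 0.

Definition one_P : 'M[F]_4 -> 'F_2 := fun p => if is_point p then 1 else 0.

Definition in_chi_span (S : {set 'M[F]_4}) (f : 'M[F]_4 -> 'F_2) : Prop :=
  exists c : 'M[F]_4 -> 'F_2,
    forall p, is_point p -> f p = \sum_(l in S) c l * chi l p.

Definition valid_Y (t : nat) (Y : {set 'M[F]_4}) : Prop :=
  [/\ #|Y| = (2 ^ t)%N,
      (forall y, y \in Y -> is_line y /\ y != l0),
      (forall y, y \in Y -> exists p, [/\ is_point p, incident p y,
                                         incident p l0 & p != p0]) &
      (forall y1 y2 p, y1 \in Y -> y2 \in Y -> is_point p ->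
         incident p y1 -> incident p y2 -> incident p l0 -> y1 = y2)].
End Symplectic.

From HB Require Import structures.
From mathcomp Require Import all_boot all_order all_algebra all_fingroup all_field.
From Stdlib Require Import Ring Field.
Set Implicit Arguments. Unset Strict Implicit. Unset Printing Implicit Defensive.
Import GRing.Theory.
Local Open Scope ring_scope.

(* Let q = #|F| = 2^t, so F has characteristic 2.
   Write S = X0 :|: Y :|: L1 and call a function P -> F_2 spanned when it is
   an F_2-combination of the chi l, l \in S; spanned functions are closed
   under sums and pointwise equality on P.
   (1) Every line l <> l0 is spanned.  If p0 \in l then l \in X0, if l misses
       l0 then l \in L1.  Otherwise l meets l0 in a point Pa a = <(a,1,0,0)>,
       and then l = Mline a c = <(a,1,0,0), (c,0,a,1)> for a unique c.  As
       #|Y| = q, Y contains the line Mline a c' through Pa a.  For c <> c' the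
       lines Gline a s c c' and Gline a s c' c (s \in F) lie in L1 and form,
       together with Mline a c', an F_2-decomposition of chi (Mline a c)
       (lemma reg_chi): each point of Mline a c is covered an odd number of
       times and every other point an even number of times.
   (2) The constant 1 is spanned: choosing b with x^2 + x + b irreducible,
       the line Vsp and the q^2 lines Lsp x y form a spread (a partition of
       the points) avoiding l0, so 1 = chi Vsp + \sum chi (Lsp x y) by (1). *)

Section SpanClosure.
Variable F : finFieldType.
Implicit Types (S : {set 'M[F]_4}) (f g : 'M[F]_4 -> 'F_2).

Lemma span_chi S l : l \in S -> in_chi_span S (chi l).
Proof.
move=> hl; exists (fun m => if m == l then 1 else 0) => p _.
rewrite (bigD1 l) //= eqxx mul1r big1 ?addr0 // => m /andP[_ /negbTE ->].
by rewrite mul0r.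
Qed.

Lemma span_zero S : in_chi_span S (fun _ => 0).
Proof. by exists (fun _ => 0) => p _; rewrite big1 // => l _; rewrite mul0r. Qed.

Lemma span_add S f g : in_chi_span S f -> in_chi_span S g ->
  in_chi_span S (fun p => f p + g p).
Proof.
case=> c1 e1 [c2 e2]; exists (fun l => c1 l + c2 l) => p hp.
by rewrite e1 // e2 // -big_split; apply: eq_bigr => l _; rewrite mulrDl.
Qed.

Lemma span_ext S f g : in_chi_span S g -> (forall p, is_point p -> f p = g p) ->
  in_chi_span S f.
Proof. by case=> c e h; exists c => p hp; rewrite h // e. Qed.

Lemma span_sum S (I : finType) (g : I -> 'M[F]_4 -> 'F_2) :
  (forall i, in_chi_span S (g i)) -> in_chi_span S (fun p => \sum_i g i p).
Proof.
move=> h.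
suff H : forall r, in_chi_span S (fun p => \sum_(i <- r) g i p) by apply: H.
elim => [|i r IH].
  by apply: span_ext (span_zero S) _ => p _; rewrite big_nil.
by apply: span_ext (span_add (h i) IH) _ => p _; rewrite big_cons.
Qed.

End SpanClosure.

Lemma sum_indicator_unique (I : finType) (P : I -> bool) :
  (forall s s', P s -> P s' -> s = s') ->
  \sum_s (if P s then 1 else 0 : 'F_2) = if [exists s, P s] then 1 else 0.
Proof.
move=> h; case: existsP => [[s0 hs0]|hn].
  rewrite (bigD1 s0) //= hs0 big1 ?addr0 // => s ne.
  by case: ifP => // hs; rewrite (h _ _ hs hs0) eqxx in ne.
by rewrite big1 // => s _; case: ifP => // hs; exfalso; apply: hn; exists s.
Qed.

Lemma indicator_split (b1 s1 b2 s2 : bool) :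
  (b1 || s1) = (b2 || s2) -> ~~ (b1 && s1) -> ~~ (b2 && s2) ->
  (if b1 then 1 else 0 : 'F_2) =
  (if s1 then 1 else 0) + (if b2 then 1 else 0) + (if s2 then 1 else 0).
Proof.
have t2 : (1 + 1 : 'F_2) = 0 by apply/eqP.
by case: b1 s1 b2 s2 => [] [] [] [] //= _ _ _; rewrite ?addr0 ?add0r ?t2.
Qed.

Lemma char2_of (F : finFieldType) t : #|F| = (2 ^ t)%N -> (1 + 1 : F) = 0.
Proof.
move=> hq; have h : 2%N \in [pchar F] by apply: (card_finPcharP hq).
by rewrite -mulr2n (pcharf0 h).
Qed.

Section CharTwo.
Variable F : finFieldType.
Hypothesis char2 : (1 + 1 : F) = 0.

(* F viewed through constants that Stdlib's ring/field tactics can register *)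
Definition Fc : Type := F.
Definition fadd (x y : Fc) : Fc := x + y.
Definition fmul (x y : Fc) : Fc := x * y.
Definition fopp (x : Fc) : Fc := - x.
Definition fsub (x y : Fc) : Fc := x - y.
Definition finv (x : Fc) : Fc := x^-1.
Definition fdiv (x y : Fc) : Fc := x / y.
Definition f0 : Fc := 0.
Definition f1 : Fc := 1.

Lemma F_ring_theory : @ring_theory Fc f0 f1 fadd fmul fsub fopp eq.
Proof.
rewrite /fadd/fmul/fsub/fopp/f0/f1; split=> //=;
  [exact: add0r|exact: addrC|exact: addrA|exact: mul1r|exact: mulrC|exact: mulrA
  |exact: mulrDl|exact: subrr].
Qed.

Lemma F_field_theory : @field_theory Fc f0 f1 fadd fmul fsub fopp fdiv finv eq.
Proof.
split=> //=; [exact: F_ring_theory| exact/eqP/oner_neq0|].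
by move=> x Hx; rewrite /fmul/finv/f1 mulVf //; exact/eqP.
Qed.

Lemma addrr_char2 (x : F) : x + x = 0.
Proof. by rewrite -[x]mul1r -mulrDl char2 mul0r. Qed.

Lemma oppr_char2 (x : F) : - x = x.
Proof. by apply/eqP; rewrite -subr_eq0 -opprD addrr_char2 oppr0. Qed.

Lemma addr_eq0_char2 (x y : F) : (x + y == 0) = (x == y).
Proof. by rewrite -(subr_eq0 x y) oppr_char2. Qed.

(* coefficients are taken in F_2 = bool, embedded into F *)
Definition bool_to_F (b : bool) : Fc := if b then 1 else 0.

Lemma bool_to_F_morph : ring_morph f0 f1 fadd fmul fsub fopp eq
  false true xorb andb xorb (fun b => b) Bool.eqb bool_to_F.
Proof.
split=> //=.
- by case; case; rewrite /fadd/bool_to_F/= ?addr0 ?add0r ?char2.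
- by case; case; rewrite /fsub/bool_to_F/= ?subr0 ?sub0r ?oppr_char2 ?subrr ?addr0.
- by case; case; rewrite /fmul/bool_to_F/= ?mulr0 ?mul0r ?mulr1.
- by case; rewrite /fopp/bool_to_F/= ?oppr0 ?oppr_char2.
- by case; case.
Qed.

Add Field F_char2_field : F_field_theory (morphism bool_to_F_morph).

(* lets a goal x = y in F be restated as an equation in Fc *)
Lemma fadd0_inj (x y : Fc) : fadd x f0 = fadd y f0 -> x = y.
Proof. by rewrite /fadd /f0 !addr0. Qed.

(* fold the operations of F onto the registered constants and move the
   goal equation to Fc *)
Ltac fnorm :=
  repeat match goal with
  | |- context [@Algebra.add ?i ?x ?y] => change (@Algebra.add i x y) with (@fadd x y)
  | |- context [@GRing.mul ?i ?x ?y] => change (@GRing.mul i x y) with (@fmul x y)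
  | |- context [@Algebra.opp ?i ?x] => change (@Algebra.opp i x) with (@fopp x)
  | |- context [@GRing.inv ?i ?x] => change (@GRing.inv i x) with (@finv x)
  | |- context [@Algebra.zero ?i] => change (@Algebra.zero i) with (@f0)
  | |- context [@GRing.one ?i] => change (@GRing.one i) with (@f1)
  end;
  apply: fadd0_inj.
(* matrix entries are atoms for the ring tactic *)
Ltac fgen :=
  repeat match goal with
  | |- context [@fun_of_matrix ?R ?m ?n ?M ?i ?j] =>
      let w := fresh "w" in generalize (@fun_of_matrix R m n M i j : Fc) => w
  end.
Ltac fring := fgen; fnorm; ring.

Definition vec4 (x0 x1 x2 x3 : F) : 'rV[F]_4 := \row_(j < 4) [:: x0; x1; x2; x3]`_j.
Lemma vec4_0 x0 x1 x2 x3 : vec4 x0 x1 x2 x3 0 i0 = x0. Proof. by rewrite mxE /i0 inordK. Qed.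
Lemma vec4_1 x0 x1 x2 x3 : vec4 x0 x1 x2 x3 0 i1 = x1. Proof. by rewrite mxE /i1 inordK. Qed.
Lemma vec4_2 x0 x1 x2 x3 : vec4 x0 x1 x2 x3 0 i2 = x2. Proof. by rewrite mxE /i2 inordK. Qed.
Lemma vec4_3 x0 x1 x2 x3 : vec4 x0 x1 x2 x3 0 i3 = x3. Proof. by rewrite mxE /i3 inordK. Qed.
Definition vec4E := (vec4_0, vec4_1, vec4_2, vec4_3).

Lemma ord4 (i : 'I_4) : [\/ i = i0, i = i1, i = i2 | i = i3].
Proof.
case: i => [[|[|[|[|//]]]] Hi]; [constructor 1|constructor 2|constructor 3|constructor 4];
  by apply: val_inj; rewrite /= inordK.
Qed.

Lemma row4P (u v : 'rV[F]_4) : u 0 i0 = v 0 i0 -> u 0 i1 = v 0 i1 ->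
  u 0 i2 = v 0 i2 -> u 0 i3 = v 0 i3 -> u = v.
Proof. by move=> e0 e1 e2 e3; apply/rowP => i; case: (ord4 i) => ->. Qed.

Lemma lin_coord x y (A B : 'rV[F]_4) i : (x *: A + y *: B) 0 i = x * A 0 i + y * B 0 i.
Proof. by rewrite !mxE. Qed.

Lemma scale_coord x (A : 'rV[F]_4) i : (x *: A) 0 i = x * A 0 i.
Proof. by rewrite mxE. Qed.

Lemma vec4_eta (v : 'rV[F]_4) : v = vec4 (v 0 i0) (v 0 i1) (v 0 i2) (v 0 i3).
Proof. by apply: row4P; rewrite vec4E. Qed.

Lemma vec4_eq0 (v : 'rV[F]_4) :
  (v == 0) = [&& v 0 i0 == 0, v 0 i1 == 0, v 0 i2 == 0 & v 0 i3 == 0].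
Proof.
apply/eqP/idP => [->|/and4P[/eqP a /eqP b /eqP c /eqP d]]; first by rewrite !mxE eqxx.
by apply: row4P; rewrite ?mxE.
Qed.

Definition line2 (A B : 'rV[F]_4) : 'M[F]_4 := <<col_mx A B>>%MS.

Lemma mem_line2 (v A B : 'rV[F]_4) :
  (v <= line2 A B)%MS <-> exists x y, v = x *: A + y *: B.
Proof.
rewrite /line2 genmxE -addsmxE; split.
- case/sub_addsmxP => u ->; exists (u.1 0 0), (u.2 0 0).
  by rewrite {1}(mx11_scalar u.1) {1}(mx11_scalar u.2) !mul_scalar_mx.
- case=> x [y ->]; apply: addmx_sub_adds; exact: scalemx_sub.
Qed.

Lemma mem_line2C (v A B : 'rV[F]_4) :
  (v <= line2 A B)%MS <-> exists x y,
    [/\ v 0 i0 = x * A 0 i0 + y * B 0 i0,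
        v 0 i1 = x * A 0 i1 + y * B 0 i1,
        v 0 i2 = x * A 0 i2 + y * B 0 i2 &
        v 0 i3 = x * A 0 i3 + y * B 0 i3].
Proof.
rewrite mem_line2; split.
- by case=> x [y ->]; exists x, y; rewrite !lin_coord.
- by case=> x [y [e0 e1 e2 e3]]; exists x, y; apply: row4P; rewrite lin_coord.
Qed.

Lemma sub_lin (l : 'M[F]_4) (u z : 'rV[F]_4) x y :
  (u <= l)%MS -> (z <= l)%MS -> ((x *: u + y *: z)%R <= l)%MS.
Proof. by move=> hu hz; apply: addmx_sub; apply: scalemx_sub. Qed.

Lemma point_vec (p : 'M[F]_4) : is_point p -> exists2 v : 'rV[F]_4, v != 0 & p = <<v>>%MS.
Proof.
case/andP => /eqP sp /eqP r1.
have nz : p != 0 by rewrite -mxrank_eq0 r1.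
have [i ri] : exists i, row i p != 0.
  case: (pickP (fun i => row i p != 0)) => [i hi|h]; first by exists i.
  have p0' : p = 0.
    by apply/row_matrixP => i; rewrite row0; apply/eqP; apply/negbFE; apply: h.
  by rewrite p0' eqxx in nz.
exists (row i p) => //.
have s := row_sub i p.
have e : (row i p == p)%MS by rewrite -(mxrank_leqif_eq s).2 rank_rV ri r1.
by rewrite -{1}sp; apply/esym/genmxP.
Qed.

Lemma is_point_gen (v : 'rV[F]_4) : v != 0 -> is_point <<v>>%MS.
Proof. by move=> nz; rewrite /is_point /is_subspace genmx_id eqxx genmxE rank_rV nz. Qed.

Lemma incident_gen (v : 'rV[F]_4) l : incident <<v>>%MS l = (v <= l)%MS.
Proof. by rewrite /incident genmxE. Qed.

Lemma chi_gen (v : 'rV[F]_4) l : v != 0 -> chi l <<v>>%MS = if (v <= l)%MS then 1 else 0.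
Proof. by move=> nz; rewrite /chi is_point_gen // incident_gen. Qed.

Definition indep (A B : 'rV[F]_4) := forall x y, x *: A + y *: B = 0 -> x = 0 /\ y = 0.

Lemma indep2 (A B : 'rV[F]_4) i j : A 0 i * B 0 j - A 0 j * B 0 i != 0 -> indep A B.
Proof.
move=> hd x y e.
have ei : x * A 0 i + y * B 0 i = 0 by rewrite -lin_coord e mxE.
have ej : x * A 0 j + y * B 0 j = 0 by rewrite -lin_coord e mxE.
have ex : x * (A 0 i * B 0 j - A 0 j * B 0 i) = 0.
  rewrite -[RHS](addr0 0) -{1}(mulr0 (B 0 j)) -{1}ei -(mulr0 (B 0 i)) -ej; fring.
have ey : y * (A 0 i * B 0 j - A 0 j * B 0 i) = 0.
  rewrite -[RHS](addr0 0) -{1}(mulr0 (A 0 i)) -{1}ej -(mulr0 (A 0 j)) -ei; fring.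
by split; apply/eqP; [move/eqP: ex|move/eqP: ey]; rewrite mulf_eq0 (negbTE hd) orbF.
Qed.

Lemma rank_line2 A B : indep A B -> \rank (line2 A B) = 2%N.
Proof.
move=> hi; rewrite /line2 genmxE -addsmxE.
have [_ e] := mxrank_adds_leqif A B.
have nzA : A != 0.
  apply/eqP=> A0; have [h1 _] : (1:F) = 0 /\ (0:F) = 0.
    by apply: hi; rewrite A0 scaler0 scale0r addr0.
  by move/eqP: h1; rewrite oner_eq0.
have nzB : B != 0.
  apply/eqP=> B0; have [_ h1] : (0:F) = 0 /\ (1:F) = 0.
    by apply: hi; rewrite B0 scaler0 scale0r addr0.
  by move/eqP: h1; rewrite oner_eq0.
rewrite !rank_rV nzA nzB /= in e.
apply/eqP; rewrite e; apply/rV_subP => u.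
rewrite sub_capmx => /andP[/sub_rVP[x ->] /sub_rVP[y ey]].
have [x0 _] : x = 0 /\ - y = 0 by apply: hi; rewrite ey scaleNr subrr.
by rewrite x0 scale0r sub0mx.
Qed.

Lemma is_line2 A B : indep A B -> sform A B = 0 -> is_line (line2 A B).
Proof.
move=> hi hS; apply/and3P; split; first by rewrite /is_subspace /line2 genmx_id.
  by rewrite rank_line2.
apply/forallP => u; apply/forallP => w; apply/implyP => /andP[].
move=> /mem_line2C [x [y [u0 u1 u2 u3]]] /mem_line2C [x' [y' [w0 w1 w2 w3]]].
apply/eqP; rewrite /sform u0 u1 u2 u3 w0 w1 w2 w3.
rewrite -[RHS](mulr0 (x * y' - y * x')) -hS /sform; fring.
Qed.

Lemma line_eq l A B : is_line l -> indep A B -> (A <= l)%MS -> (B <= l)%MS -> l = line2 A B.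
Proof.
case/and3P => /eqP sl /eqP rl _ hi hA hB.
have s : (line2 A B <= l)%MS by rewrite /line2 genmxE col_mx_sub hA hB.
have e : (line2 A B == l)%MS by rewrite -(mxrank_leqif_eq s).2 rl rank_line2.
by rewrite -sl; apply/esym; rewrite /line2 -genmx_id; apply/genmxP.
Qed.

Lemma l0E : l0 F = line2 (vec4 1 0 0 0) (vec4 0 1 0 0).
Proof.
by rewrite /l0; congr (<< col_mx _ _ >>%MS);
  apply: row4P; rewrite !mxE /i0 /i1 /i2 /i3 -?val_eqE /= ?inordK.
Qed.

Lemma p0E : p0 F = <<vec4 1 0 0 0>>%MS.
Proof.
by rewrite /p0; congr (<< _ >>%MS); apply: row4P; rewrite !mxE /i0 /i1 /i2 /i3 -?val_eqE /= ?inordK.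
Qed.

(* The points of l0 other than p0 are the <<Pa a>>.  The lines through
   <<Pa a>> other than l0 are the Mline a c, spanned by Pa a and Wv a c.  For
   c1 <> c2 the lines Gline a s c1 c2 (s \in F) miss l0. *)
Definition Pa a := vec4 a 1 0 0.
Definition Wv a c := vec4 c 0 a 1.
Definition Mline a c := line2 (Pa a) (Wv a c).
Definition Gv1 a s c1 := vec4 (s * a + c1) s a 1.
Definition Gv2 a s c1 c2 := vec4 (s * c2) 0 (s * a + (c1 + c2)) s.
Definition Gline a s c1 c2 := line2 (Gv1 a s c1) (Gv2 a s c1 c2).

Lemma Pa_nz a : Pa a != 0.
Proof. by rewrite vec4_eq0 /Pa !vec4E oner_eq0 !andbF. Qed.

Lemma Pa_l0 a : (Pa a <= l0 F)%MS.
Proof.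
rewrite l0E; apply/mem_line2; exists a, 1; apply: row4P; rewrite lin_coord /Pa !vec4E; fring.
Qed.

Lemma indepPW a c : indep (Pa a) (Wv a c).
Proof. apply: (@indep2 _ _ i1 i3); rewrite /Pa /Wv !vec4E mulr1 mulr0 subr0; exact: oner_neq0. Qed.

Lemma indepG a s c1 c2 : c1 != c2 -> indep (Gv1 a s c1) (Gv2 a s c1 c2).
Proof.
move=> hc; apply: (@indep2 _ _ i3 i2); rewrite /Gv1 /Gv2 !vec4E.
have -> : 1 * (s * a + (c1 + c2)) - a * s = c1 + c2 by fring.
by rewrite addr_eq0_char2.
Qed.

Lemma Gline_line a s c1 c2 : c1 != c2 -> is_line (Gline a s c1 c2).
Proof.
move=> hc; apply: is_line2; first exact: indepG.
rewrite /sform /Gv1 /Gv2 !vec4E; fring.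
Qed.

Lemma Gline_L1 a s c1 c2 : c1 != c2 -> Gline a s c1 c2 \in L1 F.
Proof.
move=> hc; rewrite inE Gline_line //=; apply/forallP => p; apply/negP => /and3P[pp hp hl].
case: (point_vec pp) => v vn pv; rewrite pv !incident_gen l0E in hp hl.
case/mem_line2C: hl => x [y []]; rewrite !vec4E => _ _ e2 e3.
case/mem_line2C: hp => x' [y' []]; rewrite /Gv1 /Gv2 !vec4E => g0 g1 g2 g3.
have ey : y' * (c1 + c2) = 0.
  transitivity ((x' * a + y' * (s * a + (c1 + c2))) + a * (x' * 1 + y' * s)); first by fring.
  by rewrite -g2 -g3 e2 e3; fring.
move/eqP: ey; rewrite mulf_eq0 addr_eq0_char2 (negbTE hc) orbF => /eqP y0.
have x0 : x' = 0 by move: g3; rewrite e3 y0 !mulr0 !mul0r !addr0 mulr1 => <-.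
move/negP: vn; apply; rewrite vec4_eq0 g0 g1 g2 g3 x0 y0; apply/and4P; split; apply/eqP; fring.
Qed.

Lemma Wv_comb (a w0 w1 w2 w3 : F) : w3 != 0 -> w2 = a * w3 ->
  Wv a ((w0 - a * w1) / w3) = w3^-1 *: vec4 w0 w1 w2 w3 + (- (w1 / w3)) *: Pa a.
Proof.
move=> hw e2; apply: row4P; rewrite lin_coord /Wv /Pa !vec4E ?e2; fnorm; field; exact/eqP.
Qed.

Lemma e0_comb (a w0 w1 : F) : w0 - a * w1 != 0 ->
  vec4 1 0 0 0 = (w0 - a * w1)^-1 *: vec4 w0 w1 0 0 + (- ((w0 - a * w1)^-1 * w1)) *: Pa a.
Proof.
move=> hk; apply: row4P; rewrite lin_coord /Pa !vec4E; fnorm; field; exact/eqP.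
Qed.

Lemma e1_comb (a : F) : vec4 0 1 0 0 = 1 *: Pa a + (- a) *: vec4 1 0 0 0.
Proof. apply: row4P; rewrite lin_coord /Pa !vec4E; fring. Qed.

(* Every line other than l0 through <<Pa a>> is some Mline a c: its
   vectors orthogonal to Pa a are forced into the span of Pa a and Wv a c. *)
Lemma line_Pa l a : is_line l -> (Pa a <= l)%MS -> l != l0 F -> exists c, l = Mline a c.
Proof.
move=> hl hPa hn; case/and3P: (hl) => /eqP sl /eqP rl /forallP iso.
have [w /andP[wl wn]] : exists w : 'rV[F]_4, (w <= l)%MS && ~~ (w <= Pa a)%MS.
  case: (boolP [exists w : 'rV[F]_4, (w <= l)%MS && ~~ (w <= Pa a)%MS]) => [/existsP //|/existsPn hn'].
  have : (l <= Pa a)%MS by apply/rV_subP => w wl; move: (hn' w); rewrite wl /= negbK.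
  move/mxrankS; rewrite rl rank_rV Pa_nz //.
have s0 : sform (Pa a) w = 0.
  by move: (iso (Pa a)) => /forallP/(_ w)/implyP; rewrite hPa wl => /(_ isT)/eqP.
have e2 : w 0 i2 = a * w 0 i3.
  transitivity (sform (Pa a) w + a * w 0 i3); last by rewrite s0 add0r.
  rewrite /sform /Pa !vec4E; fring.
have [w30|w3n] := eqVneq (w 0 i3) 0.
- have w20 : w 0 i2 = 0 by rewrite e2 w30 mulr0.
  have wE : w = vec4 (w 0 i0) (w 0 i1) 0 0 by rewrite {1}(vec4_eta w) w20 w30.
  have hk : w 0 i0 - a * w 0 i1 != 0.
    apply: contra wn => /eqP hk; apply/sub_rVP; exists (w 0 i1).
    apply: row4P; rewrite [RHS]mxE /Pa vec4E ?w20 ?w30 ?mulr1 ?mulr0 //.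
    by apply/eqP; rewrite -subr_eq0 (mulrC (w 0 i1)) hk.
  have he0 : (vec4 1 0 0 0 <= l)%MS by rewrite (e0_comb hk) -wE; apply: sub_lin.
  have he1 : (vec4 0 1 0 0 <= l)%MS by rewrite (e1_comb a); apply: sub_lin.
  move: hn; rewrite l0E (line_eq hl _ he0 he1) ?eqxx //.
  apply: (@indep2 _ _ i0 i1); rewrite !vec4E mulr1 mulr0 subr0; exact: oner_neq0.
- exists ((w 0 i0 - a * w 0 i1) / w 0 i3).
  apply: line_eq => //; first exact: indepPW.
  by rewrite (Wv_comb _ _ w3n e2) -vec4_eta; apply: sub_lin.
Qed.

Lemma meet_l0 (l : 'M[F]_4) (v : 'rV[F]_4) : v != 0 -> (v <= l)%MS -> (v <= l0 F)%MS ->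
  <<v>>%MS != p0 F -> exists a, (Pa a <= l)%MS.
Proof.
move=> vn vl vl0 vp; move: vl0; rewrite l0E => /mem_line2C [x [y []]]; rewrite !vec4E => h0 h1 h2' h3.
have vE : v = vec4 x y 0 0.
  by apply: row4P; rewrite !vec4E ?h0 ?h1 ?h2' ?h3; fring.
have [y0|yn] := eqVneq y 0.
- have xn : x != 0 by apply: contra vn => /eqP x0; rewrite vE x0 y0 vec4_eq0 !vec4E eqxx.
  have : <<v>>%MS = p0 F.
    rewrite p0E; apply/genmxP; rewrite vE y0.
    have -> : vec4 x 0 0 0 = x *: vec4 1 0 0 0 by apply: row4P; rewrite scale_coord !vec4E; fring.
    by apply/eqmxP; apply: eqmx_scale.
  by move/eqP; rewrite (negbTE vp).
- exists (x / y); have -> : Pa (x / y) = y^-1 *: v.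
    apply: row4P; rewrite scale_coord vE /Pa !vec4E; fnorm; field; exact/eqP.
  exact: scalemx_sub.
Qed.

Lemma line_meets_l0 l : is_line l -> ~~ incident (p0 F) l -> l \notin L1 F ->
  exists a, (Pa a <= l)%MS.
Proof.
move=> hl hp0; rewrite inE hl /= => /forallPn [p]; rewrite negbK => /and3P [pp hpl hpl0].
case: (point_vec pp) => v vn pv; rewrite pv !incident_gen in hpl hpl0.
have vp : <<v>>%MS != p0 F by apply: contra hp0 => /eqP <-; rewrite incident_gen.
exact: (meet_l0 vn hpl hpl0 vp).
Qed.
(* Since #|Y| = q = #|l0 \ p0| and distinct lines of Y meet l0 in distinct
   points, every point <<Pa a>> lies on a line of Y. *)
Lemma Y_cover t (Y : {set 'M[F]_4}) : #|F| = (2 ^ t)%N -> valid_Y t Y ->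
  forall a, exists y, [/\ y \in Y, is_line y, y != l0 F & (Pa a <= y)%MS].
Proof.
move=> hq [cY lY mY uY] a.
pose f (y : 'M[F]_4) := odflt 0 [pick a | (Pa a <= y)%MS].
have hf : forall y, y \in Y -> (Pa (f y) <= y)%MS.
  move=> y hy; case: (mY y hy) => p [pp py pl pn].
  case: (point_vec pp) => v vn pv; rewrite pv !incident_gen in py pl; rewrite pv in pn.
  case: (meet_l0 vn py pl pn) => a' ha'.
  rewrite /f; case: pickP => [a'' //|hn]; by rewrite hn in ha'.
have inj : {in Y &, injective f}.
  move=> y1 y2 hy1 hy2 e; apply: (uY y1 y2 <<Pa (f y1)>>%MS) => //.
  - exact/is_point_gen/Pa_nz.
  - by rewrite incident_gen hf.
  - by rewrite incident_gen e hf.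
  - by rewrite incident_gen Pa_l0.
have eT : f @: Y = [set: F].
  by apply/eqP; rewrite eqEcard subsetT cardsT card_in_imset // cY -hq /=; apply: leqnn.
have : a \in f @: Y by rewrite eT inE.
case/imsetP => y hy ->; have [yl yn] := lY y hy.
by exists y; split => //; apply: hf.
Qed.

(* For c <> c' write a nonzero v in coordinates
   (U, D, w1 = v1, w3 = v3) adapted to Mline a c (see ReguliMembership):
   then v is on Mline a c iff U = D = 0, on Mline a c' iff D = 0 and U = w3,
   on Gline a s c' c iff coverG1 s, and on Gline a s c c' iff coverG2 s.
   Both "Mline a c or some Gline a s c' c" and "Mline a c' or some
   Gline a s c c'" amount to the quadric w1 D = U (w3 + U), each union being
   disjoint and each parameter s unique. *)
Section Quad.
Variables U D w1 w3 : F.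
Hypothesis nz : ~~ [&& U == 0, D == 0, w1 == 0 & w3 == 0].

Definition coverG1 s := (w1 == s * U) && (U + s * D == w3).
Definition coverG2 s := (U == s * D) && (w1 == s * (w3 + U)).

Lemma union_M1_G1 : ((U == 0) && (D == 0)) || [exists s, coverG1 s] = (w1 * D == U * (w3 + U)).
Proof.
apply/idP/idP.
- case/orP => [/andP[/eqP-> /eqP->]|/existsP[s /andP[/eqP-> /eqP<-]]]; apply/eqP; fring.
- move/eqP => q; have [U0|Un] := eqVneq U 0.
  + have [D0|Dn] := eqVneq D 0; first by rewrite ?U0 ?D0 ?eqxx.
    apply/orP; right; apply/existsP; exists (w3 / D).
    have w10 : w1 = 0.
      by move: q; rewrite U0 mul0r => /eqP; rewrite mulf_eq0 (negbTE Dn) orbF => /eqP.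
    by rewrite /coverG1 U0 w10 mulr0 eqxx /= add0r divfK.
  + apply/orP; right; apply/existsP; exists (w1 / U).
    rewrite /coverG1 divfK // eqxx /=; apply/eqP.
    have e : w1 / U * D = w3 + U.
      apply: (mulIf Un); rewrite [RHS]mulrC -q.
      by fnorm; field; apply/eqP.
    rewrite e; fring.
Qed.

Lemma union_M2_G2 : ((D == 0) && (U == w3)) || [exists s, coverG2 s] = (w1 * D == U * (w3 + U)).
Proof.
apply/idP/idP.
- case/orP => [/andP[/eqP-> /eqP->]|/existsP[s /andP[/eqP eU /eqP ew]]];
    apply/eqP; [fring| rewrite ew eU; fring].
- move/eqP => q; have [D0|Dn] := eqVneq D 0.
  + have [Uw|Unw] := eqVneq U w3; first by rewrite ?D0 ?Uw ?eqxx.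
    have U0 : U = 0.
      move: q; rewrite D0 mulr0 => /esym/eqP; rewrite mulf_eq0 addr_eq0_char2 (eq_sym w3 U) (negbTE Unw) orbF.
      by move/eqP.
    have w3n : w3 != 0 by apply: contra Unw => /eqP ->; rewrite U0.
    apply/orP; right; apply/existsP; exists (w1 / w3).
    by rewrite /coverG2 U0 D0 mulr0 eqxx addr0 (divfK w3n) eqxx.
  + apply/orP; right; apply/existsP; exists (U / D).
    rewrite /coverG2 divfK // eqxx /=; apply/eqP.
    apply: (mulIf Dn); rewrite q.
    by fnorm; field; apply/eqP.
Qed.

Lemma disjoint_M1_G1 : ~~ (((U == 0) && (D == 0)) && [exists s, coverG1 s]).
Proof.
apply/negP => /andP[/andP[/eqP U0 /eqP D0] /existsP[s /andP[/eqP e1 /eqP e3]]].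
by move/negP: nz; apply; rewrite e1 -e3 U0 D0 !mulr0 addr0 !eqxx.
Qed.

Lemma disjoint_M2_G2 : ~~ (((D == 0) && (U == w3)) && [exists s, coverG2 s]).
Proof.
apply/negP => /andP[/andP[/eqP D0 /eqP Uw] /existsP[s /andP[/eqP eU /eqP ew]]].
have U0 : U = 0 by rewrite eU D0 mulr0.
by move/negP: nz; apply; rewrite ew -Uw U0 D0 addr0 !mulr0 !eqxx.
Qed.

Lemma coverG1_unique s s' : coverG1 s -> coverG1 s' -> s = s'.
Proof.
move=> /andP[/eqP a1 /eqP a3] /andP[/eqP b1 /eqP b3].
apply/eqP; apply: contraR nz => ne.
have U0 : U = 0.
  have : (s - s') * U = 0 by rewrite mulrBl -a1 -b1 subrr.
  by move/eqP; rewrite mulf_eq0 subr_eq0 (negbTE ne) => /eqP.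
have D0 : D = 0.
  have e : s * D = s' * D by apply: (addrI U); rewrite a3 b3.
  have : (s - s') * D = 0 by rewrite mulrBl e subrr.
  by move/eqP; rewrite mulf_eq0 subr_eq0 (negbTE ne) => /eqP.
by rewrite a1 -a3 U0 D0 !mulr0 addr0 !eqxx.
Qed.

Lemma coverG2_unique s s' : coverG2 s -> coverG2 s' -> s = s'.
Proof.
move=> /andP[/eqP a1 /eqP a3] /andP[/eqP b1 /eqP b3].
apply/eqP; apply: contraR nz => ne.
have D0 : D = 0.
  have : (s - s') * D = 0 by rewrite mulrBl -a1 -b1 subrr.
  by move/eqP; rewrite mulf_eq0 subr_eq0 (negbTE ne) => /eqP.
have W0 : w3 + U = 0.
  have : (s - s') * (w3 + U) = 0 by rewrite mulrBl -a3 -b3 subrr.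
  by move/eqP; rewrite mulf_eq0 subr_eq0 (negbTE ne) => /eqP.
have U0 : U = 0 by rewrite a1 D0 mulr0.
have w30 : w3 = 0 by rewrite -W0 U0 addr0.
by rewrite a3 W0 U0 D0 w30 mulr0 !eqxx.
Qed.

End Quad.

Section Reg.
Variables (a c c' U D : F) (v : 'rV[F]_4).
Hypothesis hd : c + c' != 0.
Hypothesis E0 : v 0 i0 = U * (c + c') + a * v 0 i1 + c * v 0 i3.
Hypothesis E2 : v 0 i2 = D * (c + c') + a * v 0 i3.

Lemma memM1 : (v <= Mline a c)%MS = (U == 0) && (D == 0).
Proof.
apply/idP/idP.
- case/mem_line2C => x [y []]; rewrite /Pa /Wv !vec4E E0 E2 => h0 h1 h2' h3.
  rewrite h1 h3 in h0 h2'.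
  have eU : U * (c + c') = 0.
    apply: (addIr (a * (x * 1 + y * 0) + c * (x * 0 + y * 1))); rewrite addrA h0; fring.
  have eD : D * (c + c') = 0.
    apply: (addIr (a * (x * 0 + y * 1))); rewrite h2'; fring.
  move/eqP: eU; move/eqP: eD; rewrite !mulf_eq0 (negbTE hd) !orbF => -> ->; done.
- case/andP => /eqP U0 /eqP D0; apply/mem_line2C; exists (v 0 i1), (v 0 i3).
  rewrite /Pa /Wv !vec4E E0 E2 U0 D0; split; fring.
Qed.

Lemma memM2 : (v <= Mline a c')%MS = (D == 0) && (U == v 0 i3).
Proof.
apply/idP/idP.
- case/mem_line2C => x [y []]; rewrite /Pa /Wv !vec4E E0 E2 => h0 h1 h2' h3.
  rewrite h1 h3 in h0 h2' *.
  have eU : U * (c + c') = (x * 0 + y * 1) * (c + c').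
    apply: (addIr (a * (x * 1 + y * 0) + c * (x * 0 + y * 1))); rewrite addrA h0; fring.
  have eD : D * (c + c') = 0.
    apply: (addIr (a * (x * 0 + y * 1))); rewrite h2'; fring.
  move/eqP: eD; rewrite !mulf_eq0 (negbTE hd) !orbF => ->.
  by rewrite (mulIf hd eU) eqxx.
- case/andP => /eqP D0 /eqP Uv; apply/mem_line2C; exists (v 0 i1), (v 0 i3).
  rewrite /Pa /Wv !vec4E E0 E2 Uv D0; split; fring.
Qed.

Lemma memG1 s : (v <= Gline a s c' c)%MS = coverG1 U D (v 0 i1) (v 0 i3) s.
Proof.
apply/idP/idP.
- case/mem_line2C => x [y []]; rewrite /Gv1 /Gv2 !vec4E E0 E2 => h0 h1 h2' h3.
  rewrite /coverG1 h1 h3 in h0 h2' *.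
  have eU : U * (c + c') = x * (c + c').
    apply: (addIr (a * (x * s + y * 0) + c * (x * 1 + y * s))); rewrite addrA h0; fring.
  have eD : D * (c + c') = y * (c + c').
    apply: (addIr (a * (x * 1 + y * s))); rewrite h2'; fring.
  rewrite (mulIf hd eU) (mulIf hd eD); apply/andP; split; apply/eqP; fring.
- case/andP => /eqP e1 /eqP e3; apply/mem_line2C; exists U, D.
  rewrite /Gv1 /Gv2 !vec4E E0 E2 e1 -e3; split; fring.
Qed.

Lemma memG2 s : (v <= Gline a s c c')%MS = coverG2 U D (v 0 i1) (v 0 i3) s.
Proof.
apply/idP/idP.
- case/mem_line2C => x [y []]; rewrite /Gv1 /Gv2 !vec4E E0 E2 => h0 h1 h2' h3.
  rewrite /coverG2 h1 h3 in h0 h2' *.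
  have eU : U * (c + c') = (s * y) * (c + c').
    apply: (addIr (a * (x * s + y * 0) + c * (x * 1 + y * s))); rewrite addrA h0; fring.
  have eD : D * (c + c') = y * (c + c').
    apply: (addIr (a * (x * 1 + y * s))); rewrite h2'; fring.
  rewrite (mulIf hd eU) (mulIf hd eD); apply/andP; split; apply/eqP; fring.
- case/andP => /eqP e1 /eqP e3; apply/mem_line2C; exists (v 0 i3 + U), D.
  rewrite /Gv1 /Gv2 !vec4E E0 E2 e3 e1; split; fring.
Qed.

Lemma nz_UD : v != 0 -> ~~ [&& U == 0, D == 0, v 0 i1 == 0 & v 0 i3 == 0].
Proof.
move=> vn; apply/negP => /and4P[/eqP U0 /eqP D0 /eqP a1 /eqP a3].
move/negP: vn; apply; rewrite vec4_eq0 E0 E2 U0 D0 a1 a3; apply/and4P; split; apply/eqP; fring.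
Qed.

End Reg.

Lemma reg_chi a c c' (v : 'rV[F]_4) : c != c' -> v != 0 ->
  (if (v <= Mline a c)%MS then 1 else 0 : 'F_2) =
  \sum_s (if (v <= Gline a s c' c)%MS then 1 else 0) + (if (v <= Mline a c')%MS then 1 else 0)
  + \sum_s (if (v <= Gline a s c c')%MS then 1 else 0).
Proof.
move=> hc vn; have hd : c + c' != 0 by rewrite addr_eq0_char2.
set U := (v 0 i0 + a * v 0 i1 + c * v 0 i3) / (c + c').
set D := (v 0 i2 + a * v 0 i3) / (c + c').
have E0 : v 0 i0 = U * (c + c') + a * v 0 i1 + c * v 0 i3.
  by rewrite /U divfK //; fring.
have E2 : v 0 i2 = D * (c + c') + a * v 0 i3.
  by rewrite /D divfK //; fring.
have nz := nz_UD E0 E2 vn.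
rewrite (memM1 hd E0 E2) (memM2 hd E0 E2).
under eq_bigr => s _ do rewrite (memG1 hd E0 E2).
under [X in _ + _ + X]eq_bigr => s _ do rewrite (memG2 hd E0 E2).
rewrite !sum_indicator_unique; [|exact: coverG2_unique nz|exact: coverG1_unique nz].
apply: indicator_split; [by rewrite union_M1_G1 union_M2_G2| exact: disjoint_M1_G1 nz| exact: disjoint_M2_G2 nz].
Qed.

Lemma span_switch (S : {set 'M[F]_4}) a c c' : L1 F \subset S -> c != c' ->
  in_chi_span S (chi (Mline a c')) -> in_chi_span S (chi (Mline a c)).
Proof.
move=> L1S hc hc'.
have hG c1 c2 : c1 != c2 -> in_chi_span S (fun p => \sum_s chi (Gline a s c1 c2) p).
  by move=> h; apply: span_sum => s; apply: span_chi; apply: (subsetP L1S); rewrite Gline_L1.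
apply: (@span_ext _ _ _ (fun p => (\sum_s chi (Gline a s c' c) p + chi (Mline a c') p)
                               + \sum_s chi (Gline a s c c') p)).
  by apply: span_add; [apply: span_add => //; apply: hG; rewrite eq_sym|apply: hG].
move=> q qp; case: (point_vec qp) => w wn ->{q qp} /=.
rewrite !chi_gen //.
under eq_bigr => s _ do rewrite chi_gen //.
under [X in _ + X]eq_bigr => s _ do rewrite chi_gen //.
exact: reg_chi.
Qed.

Lemma line_in_span (S : {set 'M[F]_4}) : X0 F \subset S -> L1 F \subset S ->
  (forall a, exists y, [/\ y \in S, is_line y, y != l0 F & (Pa a <= y)%MS]) ->
  forall l, is_line l -> l != l0 F -> in_chi_span S (chi l).
Proof.
move=> X0S L1S coverS l hl hn.
have [hp0|hp0] := boolP (incident (p0 F) l).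
  by apply: span_chi; apply: (subsetP X0S); rewrite !inE hl hp0 hn.
have [hL1|hL1] := boolP (l \in L1 F); first by apply: span_chi; apply: (subsetP L1S).
have [a ha] := line_meets_l0 hl hp0 hL1.
have [c ->] := line_Pa hl ha hn.
have [y [yS yl yn hya]] := coverS a.
have [c' yE] := line_Pa yl hya yn.
have hc' : in_chi_span S (chi (Mline a c')) by rewrite -yE; apply: span_chi.
have [-> //|hc] := eqVneq c c'.
exact: span_switch hc hc'.
Qed.
(* Part (2).  In characteristic 2 some x^2 + x + b has no root, since
   x |-> x^2 + x is two-to-one. *)
Lemma exists_irreducible_quadratic : exists b : F, forall x : F, x * x + x + b != 0.
Proof.
case: (boolP [exists b : F, [forall x : F, x * x + x + b != 0]]) => [/existsP[b /forallP hb]|/existsPn hn].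
  by exists b.
exfalso; pose g (x : F) := x * x + x.
have hall : forall b, b \in image g (predT : {pred F}).
  move=> b; case/forallPn: (hn b) => x; rewrite negbK addr_eq0_char2 => /eqP e.
  by apply/imageP; exists x.
have /image_injP hi : #|image g (predT : {pred F})| == #|(predT : {pred F})|.
  by apply/eqP/eq_card => b; rewrite hall.
have : (0 : F) = 1 by apply: hi => //; rewrite /g mulr0 addr0 mulr1 char2.
by move/eqP; rewrite eq_sym oner_eq0.
Qed.

(* For such b, the line Vsp = <e2, e3> and the q^2 lines Lsp x y form a
   spread: every point lies on exactly one of them (lemma spread_part), the
   parameters (x, y) of the line through <v> being obtained by solving a
   linear system whose determinant is the anisotropic form
   v0^2 + v0 v1 + b v1^2.  None of these lines is l0. *)
Section Spread.
Variable b : F.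
Hypothesis hb : forall x : F, x * x + x + b != 0.

Definition Lsp x y := line2 (vec4 1 0 x (y + 1)) (vec4 0 1 (x + b * y) x).
Definition Vsp := line2 (vec4 0 0 1 0) (vec4 0 0 0 1).

Lemma Lsp_line x y : is_line (Lsp x y).
Proof.
apply: is_line2; last by rewrite /sform !vec4E; fring.
apply: (@indep2 _ _ i0 i1); rewrite !vec4E mulr1 mulr0 subr0; exact: oner_neq0.
Qed.

Lemma Vsp_line : is_line Vsp.
Proof.
apply: is_line2; last by rewrite /sform !vec4E; fring.
apply: (@indep2 _ _ i2 i3); rewrite !vec4E mulr1 mulr0 subr0; exact: oner_neq0.
Qed.

Lemma e_in_l0 : (vec4 1 0 0 0 <= l0 F)%MS /\ (vec4 0 1 0 0 <= l0 F)%MS.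
Proof.
rewrite l0E; split; apply/mem_line2; [exists 1, 0|exists 0, 1];
  by rewrite scale1r scale0r ?addr0 ?add0r.
Qed.

Lemma Lsp_ne x y : Lsp x y != l0 F.
Proof.
apply/eqP => e; case: e_in_l0; rewrite -e.
case/mem_line2C => al [be []]; rewrite !vec4E => h0 h1 h2' h3.
case/mem_line2C => al' [be' []]; rewrite !vec4E => g0 g1 g2 g3.
have al1 : al = 1 by rewrite [RHS]h0; fring.
have be0 : be = 0 by rewrite [RHS]h1; fring.
have al0 : al' = 0 by rewrite [RHS]g0; fring.
have be1 : be' = 1 by rewrite [RHS]g1; fring.
have x0 : x = 0 by rewrite [RHS]h2' al1 be0; fring.
have y1 : y = 1.
  have e1 : y + (al * (y + 1) + be * x) = 1 by rewrite al1 be0; fring.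
  by rewrite -h3 addr0 in e1.
have b0 : b = 0.
  have e1 : b = al' * x + be' * (x + b * y) by rewrite al0 be1 x0 y1; fring.
  by rewrite -g2 in e1.
by move: (hb 0); rewrite b0 mulr0 !addr0 eqxx.
Qed.

Lemma Vsp_ne : Vsp != l0 F.
Proof.
apply/eqP => e; case: e_in_l0; rewrite -e.
case/mem_line2C => al [be []]; rewrite !vec4E !mulr0 addr0 => /eqP; rewrite oner_eq0.
by [].
Qed.

Lemma memV (v : 'rV[F]_4) : (v <= Vsp)%MS = (v 0 i0 == 0) && (v 0 i1 == 0).
Proof.
apply/idP/idP.
- by case/mem_line2C => al [be []]; rewrite !vec4E !mulr0 addr0 => -> -> _ _; rewrite eqxx.
- case/andP => /eqP a0 /eqP a1; apply/mem_line2C; exists (v 0 i2), (v 0 i3).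
  rewrite !vec4E a0 a1; split; fring.
Qed.

Lemma memL (v : 'rV[F]_4) x y : (v <= Lsp x y)%MS =
  (v 0 i2 == v 0 i0 * x + v 0 i1 * (x + b * y)) && (v 0 i3 == v 0 i0 * (y + 1) + v 0 i1 * x).
Proof.
apply/idP/idP.
- case/mem_line2C => al [be []]; rewrite !vec4E => h0 h1 -> ->.
  rewrite h0 h1 !mulr1 !mulr0 addr0 add0r; apply/andP; split; apply/eqP; fring.
- case/andP => /eqP a2 /eqP a3; apply/mem_line2C; exists (v 0 i0), (v 0 i1).
  rewrite !vec4E a2 a3; split; fring.
Qed.

Lemma norm_nz (v0 v1 : F) : ~~ ((v0 == 0) && (v1 == 0)) -> v0 * v0 + v0 * v1 + b * (v1 * v1) != 0.
Proof.
move=> nz; have [v10|v1n] := eqVneq v1 0.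
  rewrite v10 !mulr0 !addr0; apply: mulf_neq0; by move: nz; rewrite v10 eqxx andbT.
have -> : v0 * v0 + v0 * v1 + b * (v1 * v1) = (v1 * v1) * ((v0 / v1) * (v0 / v1) + v0 / v1 + b).
  by fnorm; field; exact/eqP.
by apply: mulf_neq0; [apply: mulf_neq0|apply: hb].
Qed.

Lemma spread_part (v : 'rV[F]_4) : v != 0 ->
  (if (v <= Vsp)%MS then 1 else 0 : 'F_2) + \sum_(z : F * F) (if (v <= Lsp z.1 z.2)%MS then 1 else 0) = 1.
Proof.
move=> vn; rewrite memV.
case: (boolP ((v 0 i0 == 0) && (v 0 i1 == 0))) => [/andP[/eqP a0 /eqP a1]|nz].
  rewrite big1 ?addr0 // => z _; rewrite memL a0 a1 !mul0r !addr0.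
  case: ifP => // /andP[/eqP a2 /eqP a3]; move/negP: vn; case.
  by rewrite vec4_eq0 a0 a1 a2 a3 eqxx.
rewrite add0r sum_indicator_unique.
  case: existsP => // [[]]; set N := v 0 i0 * v 0 i0 + v 0 i0 * v 0 i1 + b * (v 0 i1 * v 0 i1).
  have hN : N != 0 by apply: norm_nz.
  exists ((v 0 i2 * v 0 i0 + v 0 i1 * b * (v 0 i3 + v 0 i0)) / N,
          ((v 0 i0 + v 0 i1) * (v 0 i3 + v 0 i0) + v 0 i1 * v 0 i2) / N) => /=.
  rewrite memL; apply/andP; split; apply/eqP; rewrite /N; fnorm; field; exact/eqP.
case=> x y [x' y']; rewrite !memL /= => /andP[/eqP a2 /eqP a3] /andP[/eqP b2 /eqP b3].
set v0 := v 0 i0 in a2 a3 b2 b3 nz; set v1 := v 0 i1 in a2 a3 b2 b3 nz.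
have hN := norm_nz nz.
have E1 : (v0 + v1) * (x + x') + v1 * b * (y + y') = 0.
  transitivity ((v0 * x + v1 * (x + b * y)) + (v0 * x' + v1 * (x' + b * y'))); first by fring.
  by rewrite -a2 -b2 addrr_char2.
have E2 : v1 * (x + x') + v0 * (y + y') = 0.
  transitivity ((v0 * (y + 1) + v1 * x) + (v0 * (y' + 1) + v1 * x')); first by fring.
  by rewrite -a3 -b3 addrr_char2.
have X0 : (x + x') * (v0 * v0 + v0 * v1 + b * (v1 * v1)) = 0.
  transitivity (v0 * ((v0 + v1) * (x + x') + v1 * b * (y + y')) + v1 * b * (v1 * (x + x') + v0 * (y + y'))).
    by fring.
  by rewrite E1 E2 !mulr0 addr0.
have Y0 : (y + y') * (v0 * v0 + v0 * v1 + b * (v1 * v1)) = 0.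
  transitivity (v1 * ((v0 + v1) * (x + x') + v1 * b * (y + y')) + (v0 + v1) * (v1 * (x + x') + v0 * (y + y'))).
    by fring.
  by rewrite E1 E2 !mulr0 addr0.
move/eqP: X0; move/eqP: Y0; rewrite !mulf_eq0 (negbTE hN) !orbF !addr_eq0_char2 => /eqP-> /eqP->.
done.
Qed.

End Spread.

(* Part (2): the constant 1 is the sum of the characteristic functions of
   the lines of a spread avoiding l0, hence is spanned once those lines are. *)
Lemma one_in_span (S : {set 'M[F]_4}) :
  (forall l, is_line l -> l != l0 F -> in_chi_span S (chi l)) ->
  in_chi_span S (@one_P F).
Proof.
move=> hlines; have [b hb] := exists_irreducible_quadratic.
apply: (@span_ext _ _ _ (fun p => chi Vsp p + \sum_(z : F * F) chi (Lsp b z.1 z.2) p)).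
  apply: span_add; first exact: hlines Vsp_line Vsp_ne.
  by apply: span_sum => z; apply: hlines (Lsp_line b _ _) (Lsp_ne hb _ _).
move=> q qp; case: (point_vec qp) => w wn ->{q qp} /=.
rewrite /one_P is_point_gen // chi_gen //.
under eq_bigr => z _ do rewrite chi_gen //.
by rewrite spread_part.
Qed.

End CharTwo.

Theorem lemma6 (F : finFieldType) (t : nat) (hq : #|F| = (2 ^ t)%N)
  (Y : {set 'M[F]_4}) (hY : valid_Y t Y) :
  (forall l : 'M[F]_4, is_line l -> l != l0 F ->
     in_chi_span (X0 F :|: Y :|: L1 F) (chi l))
  /\ in_chi_span (X0 F :|: Y :|: L1 F) (@one_P F).
Proof.
have char2 := char2_of hq.
set S := X0 F :|: Y :|: L1 F.
have X0S : X0 F \subset S by rewrite /S -setUA subsetUl.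
have L1S : L1 F \subset S by rewrite /S subsetUr.
have coverS a : exists y, [/\ y \in S, is_line y, y != l0 F & (Pa a <= y)%MS].
  have [y [yY yl yn ya]] := Y_cover char2 hq hY a.
  by exists y; split => //; rewrite !in_setU yY orbT.
have hlines := line_in_span char2 X0S L1S coverS.
by split; [exact: hlines | exact: one_in_span char2 S hlines].
Qed.
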